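(* Let $(\rho,u,\Theta,\beta)$ be a smooth solution of the NSME system (with $\rho>0$, $\Theta>0$, $\beta\in\mathcal S$), and let $$S=\rho\Big(\langle m^{-1}\rangle_\beta\big(\log\rho-\log Z(\beta,\Theta)-1-\tfrac n2\big)+\beta\Big).$$ Then $$\partial_tS+\nabla_x\cdot\tilde\phi=-\varepsilon\Big\{\nu|\nabla_x\chi|^2+\kappa\Big|\frac{\nabla_x\Theta}{\Theta}\Big|^2+\frac{\mu}{2\Theta}\sigma(u):\sigma(u)\Big\}\le0,$$ where $$\tilde\phi=Su+\varepsilon\Big\{-\nu\big(\log\rho-\log Z(\beta,\Theta)-1-\tfrac n2\big)\nabla_x\chi+\kappa\frac{\nabla_x\Theta}{\Theta}\Big\}.$$
   Context: Let $n\ge1$, $\varepsilon>0$, $(\gamma_m)_{m\ge1}$ in $[0,\infty)$ with $\mathcal S:=\{\beta:\sum_m\frac{me^{\beta m}}{\gamma_m}<\infty\}\ne\emptyset$; $\langle a_m\rangle_\beta:=\sum_m\frac{me^{\beta m}}{\gamma_m}a_m/\sum_m\frac{me^{\beta m}}{\gamma_m}$; $Z(\beta,\Theta)=(2\pi\Theta)^{n/2}\sum_m\frac{me^{\beta m}}{\gamma_m}$. $\mu=\rho\Theta\langle m^{-1}\rangle_\beta$, $\kappa=\frac{n+2}2\rho\Theta\langle m^{-2}\rangle_\beta$, $\nu=\rho\Theta(\langle m^{-2}\rangle_\beta-\langle m^{-1}\rangle_\beta^2)$; $\sigma(u)=\nabla_xu+(\nabla_xu)^T-\frac2n(\nabla_x\cdot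 u)\mathrm I_n$; $\chi=\log(\rho\Theta/\sum_m\frac{me^{\beta m}}{\gamma_m})$; $A:B=\sum_{ij}A_{ij}B_{ij}$. The NSME system for $(\rho,u,\Theta,\beta)(x,t)$, $x\in\mathbb{R}^n$: $\partial_t(\rho\langle m^{-1}\rangle_\beta)+\nabla_x\cdot(\rho\langle m^{-1}\rangle_\beta u)=\varepsilon\nabla_x\cdot(\nu\nabla_x\chi)$; $\partial_t\rho+\nabla_x\cdot(\rho u)=0$; $\partial_t(\rho u)+\nabla_x\cdot(\rho u\otimes u)+\nabla_x(\rho\Theta\langle m^{-1}\rangle_\beta)=\varepsilon\nabla_x\cdot(\mu\sigma(u))$; $\partial_t(\rho|u|^2+n\rho\Theta\langle m^{-1}\rangle_\beta)+\nabla_x\cdot(\rho|u|^2u+(n+2)\rho\Theta\langle m^{-1}\rangle_\beta u)=\varepsilon\nabla_x\cdot((n+2)\nu\Theta\nabla_x\chi+2\kappa\nabla_x\Theta+2\mu\sigma(u)u)$. *)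

From mathcomp Require Import ssreflect ssrbool eqtype ssrnat fintype bigop.
From Stdlib Require Import Reals.
From Coquelicot Require Import Coquelicot.
Open Scope R_scope.

(* A point of R^n is a function 'I_n -> R; a scalar field on R^n x R (space-time). *)
Definition field (n : nat) := ('I_n -> R) -> R -> R.

Definition sumI (n : nat) (f : 'I_n -> R) : R := \big[Rplus/0]_(i < n) f i.

Definition upd {n : nat} (x : 'I_n -> R) (i : 'I_n) (s : R) : 'I_n -> R :=
  fun j => if j == i then s else x j.

Definition dx {n : nat} (i : 'I_n) (f : field n) : field n :=
  fun x t => Derive (fun s => f (upd x i s) t) (x i).
Definition dt {n : nat} (f : field n) : field n :=
  fun x t => Derive (fun s => f x s) t.

Definition jcont {n : nat} (f : field n) : Prop :=
  forall x t eps, 0 < eps -> exists delta, 0 < delta /\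
    forall y s, (forall i, Rabs (y i - x i) < delta) -> Rabs (s - t) < delta ->
      Rabs (f y s - f x t) < eps.

Fixpoint Ck {n : nat} (k : nat) (f : field n) : Prop :=
  jcont f /\
  match k with
  | O => True
  | S k' =>
      (forall i x t, ex_derive (fun s => f (upd x i s) t) (x i)) /\
      (forall x t, ex_derive (fun s => f x s) t) /\
      (forall i, Ck k' (dx i f)) /\ Ck k' (dt f)
  end.

Definition smooth {n : nat} (f : field n) : Prop := forall k, Ck k f.

(* weight m e^{beta m} / gamma_m ; the sequence (gamma_m)_{m>=1} is gamma : nat -> R,
   gamma 0 is irrelevant *)
Definition wt (gamma : nat -> R) (beta : R) (m : nat) : R :=
  INR m * exp (beta * INR m) / gamma m.

Definition sum1 (a : nat -> R) : R := Series (fun k => a (S k)).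

(* beta in S : sum_{m>=1} m e^{beta m}/gamma_m < infinity
   (a term with gamma_m = 0 is +infinity, hence the positivity requirement) *)
Definition inS (gamma : nat -> R) (beta : R) : Prop :=
  (forall m, (1 <= m)%nat -> 0 < gamma m) /\
  ex_series (fun k => wt gamma beta (S k)).

Definition avg (gamma : nat -> R) (beta : R) (a : nat -> R) : R :=
  sum1 (fun m => wt gamma beta m * a m) / sum1 (wt gamma beta).

Definition Mm1 gamma beta := avg gamma beta (fun m => / INR m).
Definition Mm2 gamma beta := avg gamma beta (fun m => / (INR m ^ 2)).

Definition Zpart (n : nat) (gamma : nat -> R) (beta Th : R) : R :=
  Rpower (2 * PI * Th) (INR n / 2) * sum1 (wt gamma beta).

Definition mu_c gamma (rho Th beta : R) := rho * Th * Mm1 gamma beta.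
Definition kappa_c (n : nat) gamma (rho Th beta : R) :=
  (INR n + 2) / 2 * rho * Th * Mm2 gamma beta.
Definition nu_c gamma (rho Th beta : R) :=
  rho * Th * (Mm2 gamma beta - Mm1 gamma beta ^ 2).
Definition chi_c gamma (rho Th beta : R) :=
  ln (rho * Th / sum1 (wt gamma beta)).

Definition divx {n : nat} (u : 'I_n -> field n) : field n :=
  fun x t => sumI n (fun i => dx i (u i) x t).

Definition kron {n : nat} (i j : 'I_n) : R := if i == j then 1 else 0.

Definition sigma {n : nat} (u : 'I_n -> field n) (i j : 'I_n) : field n :=
  fun x t => dx j (u i) x t + dx i (u j) x t - 2 / INR n * divx u x t * kron i j.

Definition NSME (n : nat) (eps : R) (gamma : nat -> R)
  (rho : field n) (u : 'I_n -> field n) (Th beta : field n) : Prop :=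
  let M1 : field n := fun x t => Mm1 gamma (beta x t) in
  let mu : field n := fun x t => mu_c gamma (rho x t) (Th x t) (beta x t) in
  let kappa : field n := fun x t => kappa_c n gamma (rho x t) (Th x t) (beta x t) in
  let nu : field n := fun x t => nu_c gamma (rho x t) (Th x t) (beta x t) in
  let chi : field n := fun x t => chi_c gamma (rho x t) (Th x t) (beta x t) in
  let usq : field n := fun x t => sumI n (fun j => u j x t ^ 2) in
  forall x t,
  dt (fun y s => rho y s * M1 y s) x t
    + sumI n (fun i => dx i (fun y s => rho y s * M1 y s * u i y s) x t)
    = eps * sumI n (fun i => dx i (fun y s => nu y s * dx i chi y s) x t)
  /\
  dt rho x t + sumI n (fun i => dx i (fun y s => rho y s * u i y s) x t) = 0
  /\
  (forall j : 'I_n,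
     dt (fun y s => rho y s * u j y s) x t
     + sumI n (fun i => dx i (fun y s => rho y s * u j y s * u i y s) x t)
     + dx j (fun y s => rho y s * Th y s * M1 y s) x t
     = eps * sumI n (fun i => dx i (fun y s => mu y s * sigma u j i y s) x t))
  /\
  dt (fun y s => rho y s * usq y s + INR n * rho y s * Th y s * M1 y s) x t
  + sumI n (fun i => dx i (fun y s =>
        rho y s * usq y s * u i y s
        + (INR n + 2) * rho y s * Th y s * M1 y s * u i y s) x t)
  = eps * sumI n (fun i => dx i (fun y s =>
        (INR n + 2) * nu y s * Th y s * dx i chi y s
        + 2 * kappa y s * dx i Th y s
        + 2 * mu y s * sumI n (fun j => sigma u i j y s * u j y s)) x t).

Definition entropy (n : nat) gamma (rho Th beta : field n) : field n :=
  fun x t => rho x t * (Mm1 gamma (beta x t) *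
     (ln (rho x t) - ln (Zpart n gamma (beta x t) (Th x t)) - 1 - INR n / 2)
     + beta x t).

Definition eflux (n : nat) (eps : R) gamma (rho : field n) (u : 'I_n -> field n)
  (Th beta : field n) (i : 'I_n) : field n :=
  fun x t =>
    entropy n gamma rho Th beta x t * u i x t
    + eps * ( - nu_c gamma (rho x t) (Th x t) (beta x t)
                * (ln (rho x t) - ln (Zpart n gamma (beta x t) (Th x t)) - 1 - INR n / 2)
                * dx i (fun y s => chi_c gamma (rho y s) (Th y s) (beta y s)) x t
              + kappa_c n gamma (rho x t) (Th x t) (beta x t) * (dx i Th x t / Th x t)).

Definition dissip (n : nat) gamma (rho : field n) (u : 'I_n -> field n)
  (Th beta : field n) : field n :=
  fun x t =>
    nu_c gamma (rho x t) (Th x t) (beta x t)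
      * sumI n (fun i => (dx i (fun y s => chi_c gamma (rho y s) (Th y s) (beta y s)) x t) ^ 2)
    + kappa_c n gamma (rho x t) (Th x t) (beta x t)
      * sumI n (fun i => (dx i Th x t / Th x t) ^ 2)
    + mu_c gamma (rho x t) (Th x t) (beta x t) / (2 * Th x t)
      * sumI n (fun i => sumI n (fun j => sigma u i j x t * sigma u i j x t)).

From Pilot Require Import Defs.
From HB Require Import structures.
From mathcomp Require Import ssreflect ssrbool eqtype ssrnat fintype bigop.
From Stdlib Require Import Reals Lra Lia FunctionalExtensionality.
From Coquelicot Require Import Coquelicot.
Open Scope R_scope.

(* Write N = rho <m^-1>, P = rho Theta <m^-1>, E = rho |u|^2 + n P for the conserved
   densities and L = log rho - log Z - 1 - n/2.  Two identities of the weights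
   m e^(beta m) / gamma_m, namely (log sum_m m e^(beta m)/gamma_m)' = <m> and
   <m^-1>' = 1 - <m^-1> <m>, give the Gibbs relation
     dS = (L + 1 + n/2) dN + (beta - |u|^2/(2 Theta)) d rho + sum_j u_j/Theta d(rho u_j)
          - 1/(2 Theta) dE
   along every time or space direction, and the Euler relation S = (same multipliers)
   . (N, rho, rho u, E + 2P).  So the multiplier combination of the four NSME equations
   turns their convective and pressure terms into exactly d_t S + div (S u).  With the
   same multipliers the viscous terms plus div of the eps-part of phi~ collapse, using
   grad L = grad chi - (1 + n/2) grad Theta / Theta and sigma : grad u = sigma : sigma / 2
   (sigma is symmetric and traceless), to -eps times the dissipation, which is
   nonnegative because nu = rho Theta Var(m^-1).  The moment sums are power series in
   e^beta, differentiable since e^(beta + delta) lies within their radius. *)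

HB.instance Definition _ := Monoid.isComLaw.Build R 0 Rplus
  (fun x y z => Logic.eq_sym (Rplus_assoc x y z)) Rplus_comm Rplus_0_l.

Definition exp_series (c : nat -> R) (b : R) : R := sum1 (fun m => c m * exp (b * INR m)).

Definition exp_series_coef (c : nat -> R) : nat -> R := PS_incr_1 (fun k => c (S k)).

Definition exp_series_radius (c : nat -> R) : Rbar := CV_radius (exp_series_coef c).

Lemma is_derive_eq {f : R -> R} {x d d' : R} : is_derive f x d -> d = d' -> is_derive f x d'.
Proof. by move=> H <-. Qed.

Lemma exp_mul_INR b k : exp (b * INR k) = exp b ^ k.
Proof.
elim: k => [|k IH]; first by rewrite /= Rmult_0_r exp_0.
by rewrite S_INR Rmult_plus_distr_l Rmult_1_r exp_plus IH /= Rmult_comm.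
Qed.

Lemma exp_series_PSeries c b : exp_series c b = PSeries (exp_series_coef c) (exp b).
Proof.
rewrite /exp_series /exp_series_coef PSeries_incr_1 /PSeries /sum1 -Series_scal_l.
by apply: Series_ext => k; rewrite exp_mul_INR /=; ring.
Qed.

Lemma exp_series_radius_ext c c' : (forall m, (1 <= m)%nat -> c m = c' m) ->
  exp_series_radius c = exp_series_radius c'.
Proof. by move=> E; apply: CV_radius_ext => -[|k] //=; rewrite E. Qed.

Lemma exp_series_radius_mulINR c :
  exp_series_radius (fun m => INR m * c m) = exp_series_radius c.
Proof.
rewrite /exp_series_radius /exp_series_coef CV_radius_incr_1.
by rewrite -(CV_radius_derive (PS_incr_1 (fun k => c (S k)))); apply: CV_radius_ext.
Qed.

Lemma is_derive_exp_series c b : Rbar_lt (exp b) (exp_series_radius c) ->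
  is_derive (exp_series c) b (exp_series (fun m => INR m * c m) b).
Proof.
move=> Hb.
apply: (is_derive_ext (fun z => PSeries (exp_series_coef c) (exp z))) => [z|].
  by rewrite exp_series_PSeries.
rewrite exp_series_PSeries /exp_series_coef PSeries_incr_1.
have -> : PSeries (fun k => INR (S k) * c (S k)) (exp b)
        = PSeries (PS_derive (PS_incr_1 (fun k => c (S k)))) (exp b).
  by apply: PSeries_ext.
have Hd := is_derive_PSeries (exp_series_coef c) (exp b).
rewrite Rabs_pos_eq in Hd; last exact: Rlt_le (exp_pos b).
have := is_derive_comp _ exp b _ _ (Hd Hb) (is_derive_exp b).
by rewrite /scal /= /mult /=.
Qed.

Lemma ex_series_exp_series c b : Rbar_lt (exp b) (exp_series_radius c) ->
  ex_series (fun k => c (S k) * exp (b * INR (S k))).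
Proof.
move=> Hb.
have Hd := CV_disk_inside (exp_series_coef c) (exp b).
rewrite Rabs_pos_eq in Hd; last exact: Rlt_le (exp_pos b).
have /ex_series_incr_1 := ex_series_Rabs _ (Hd Hb).
by apply: ex_series_ext => k; rewrite exp_mul_INR.
Qed.

Lemma exp_series_radius_ge c b : ex_series (fun k => c (S k) * exp (b * INR (S k))) ->
  Rbar_le (exp b) (exp_series_radius c).
Proof.
move=> Hex; apply: Rbar_not_lt_le => Hlt.
apply: (CV_disk_outside (exp_series_coef c) (exp b)).
  by rewrite Rabs_pos_eq //; exact: Rlt_le (exp_pos b).
apply: ex_series_lim_0; apply/ex_series_incr_1.
by apply: ex_series_ext Hex => k; rewrite exp_mul_INR.
Qed.

Lemma Series_ge0 a : (forall k, 0 <= a k) -> ex_series a -> 0 <= Series a.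
Proof.
move=> Ha Hex; have <- : Series (fun _ => 0 * 0) = 0 by rewrite Series_scal_l Rmult_0_l.
by apply: Series_le => // k; rewrite Rmult_0_l; split; [lra | apply: Ha].
Qed.

Section Moments.
Variable gamma : nat -> R.
Hypothesis gamma_pos : forall m, (1 <= m)%nat -> 0 < gamma m.

Definition moment (a : nat -> R) (b : R) : R := sum1 (fun m => wt gamma b m * a m).

Definition moment_radius (a : nat -> R) : Rbar :=
  exp_series_radius (fun m => INR m / gamma m * a m).

Lemma moment_exp_series a b : moment a b = exp_series (fun m => INR m / gamma m * a m) b.
Proof. by rewrite /moment /exp_series /sum1; apply: Series_ext => k; rewrite /wt /Rdiv; ring. Qed.

Lemma moment_ext a a' b : (forall m, (1 <= m)%nat -> a m = a' m) -> moment a b = moment a' b.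
Proof. by move=> E; apply: Series_ext => k; rewrite E. Qed.

Lemma moment_radius_ext a a' : (forall m, (1 <= m)%nat -> a m = a' m) ->
  moment_radius a = moment_radius a'.
Proof. by move=> E; apply: exp_series_radius_ext => m Hm; rewrite E. Qed.

Lemma moment_radius_mulINR a : moment_radius (fun m => INR m * a m) = moment_radius a.
Proof.
rewrite /moment_radius -(exp_series_radius_mulINR (fun m => INR m / gamma m * a m)).
by apply: exp_series_radius_ext => m _; ring.
Qed.

Lemma moment_radius_invINR a : moment_radius (fun m => / INR m * a m) = moment_radius a.
Proof.
rewrite -(moment_radius_mulINR (fun m => / INR m * a m)); apply: moment_radius_ext => m Hm.
by field; apply: not_0_INR; case: m Hm.
Qed.

Lemma is_derive_moment a b : Rbar_lt (exp b) (moment_radius a) ->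
  is_derive (moment a) b (moment (fun m => INR m * a m) b).
Proof.
move=> Hb; apply: (is_derive_ext (exp_series (fun m => INR m / gamma m * a m))).
  by move=> z; rewrite moment_exp_series.
have -> : moment (fun m => INR m * a m) b
          = exp_series (fun m => INR m * (INR m / gamma m * a m)) b.
  by rewrite moment_exp_series; congr exp_series; apply: functional_extensionality => m; ring.
exact: is_derive_exp_series.
Qed.

Lemma ex_series_moment a b : Rbar_lt (exp b) (moment_radius a) ->
  ex_series (fun k => wt gamma b (S k) * a (S k)).
Proof.
move=> /ex_series_exp_series Hex; apply: ex_series_ext Hex => k.
by rewrite /wt /Rdiv; simpl; ring.
Qed.

Lemma wt_ge0 b m : 0 <= wt gamma b m.
Proof.
case: m => [|m]; first by rewrite /wt /= !Rmult_0_l; lra.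
rewrite /wt /Rdiv; apply: Rmult_le_pos; last exact/Rlt_le/Rinv_0_lt_compat/gamma_pos.
by apply: Rmult_le_pos; [apply: pos_INR | exact: Rlt_le (exp_pos _)].
Qed.

Lemma moment_ge0 a b : (forall m, (1 <= m)%nat -> 0 <= a m) ->
  Rbar_lt (exp b) (moment_radius a) -> 0 <= moment a b.
Proof.
move=> Ha Hb; apply: Series_ge0; last exact: ex_series_moment Hb.
by move=> k; apply: Rmult_le_pos; [apply: wt_ge0 | apply: Ha].
Qed.

Lemma wt_sum_gt0 b : Rbar_lt (exp b) (moment_radius (fun _ => 1)) -> 0 < sum1 (wt gamma b).
Proof.
move=> Hb; have Hex := ex_series_moment _ _ Hb.
rewrite /sum1 (Series_ext _ (fun k => wt gamma b (S k) * 1)); last by move=> k; ring.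
rewrite Series_incr_1 //; apply: Rplus_lt_le_0_compat.
  rewrite Rmult_1_r /wt /Rdiv; apply: Rmult_lt_0_compat; last exact/Rinv_0_lt_compat/gamma_pos.
  by apply: Rmult_lt_0_compat; [apply: lt_0_INR; lia | apply: exp_pos].
apply: Series_ge0; last exact: (proj1 (ex_series_incr_1 _) Hex).
by move=> k; rewrite Rmult_1_r; apply: wt_ge0.
Qed.

Lemma wt_sum_moment b : sum1 (wt gamma b) = moment (fun _ => 1) b.
Proof. by rewrite /moment /sum1; apply: Series_ext => k; ring. Qed.

Lemma avg_moment a b : avg gamma b a = moment a b / moment (fun _ => 1) b.
Proof. by rewrite /avg wt_sum_moment. Qed.

Local Notation radius := (moment_radius (fun _ => 1)).

Lemma moment_radius_INR : moment_radius INR = radius.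
Proof.
by rewrite -(moment_radius_mulINR (fun _ => 1)); apply: moment_radius_ext => m _; ring.
Qed.

Lemma moment_radius_invINR1 : moment_radius (fun m => / INR m) = radius.
Proof.
by rewrite -(moment_radius_invINR (fun _ => 1)); apply: moment_radius_ext => m _; ring.
Qed.

Lemma moment_radius_invINR2 : moment_radius (fun m => / (INR m ^ 2)) = radius.
Proof.
rewrite -moment_radius_invINR1 -(moment_radius_invINR (fun m => / INR m)).
apply: moment_radius_ext => m Hm; have Hm0 : INR m <> 0 by apply: not_0_INR; case: m Hm.
by field.
Qed.

Lemma inS_moment_radius b : inS gamma b -> Rbar_le (exp b) radius.
Proof.
move=> [_ Hex]; apply: exp_series_radius_ge; apply: ex_series_ext Hex => k.
by rewrite /wt /Rdiv; simpl; ring.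
Qed.

Section AtPoint.
Variable b : R.
Hypothesis b_in : Rbar_lt (exp b) radius.

Lemma moment1_gt0 : 0 < moment (fun _ => 1) b.
Proof. by rewrite -wt_sum_moment; apply: wt_sum_gt0. Qed.

Lemma is_derive_avg a : Rbar_lt (exp b) (moment_radius a) ->
  is_derive (fun z => avg gamma z a) b
    (avg gamma b (fun m => INR m * a m) - avg gamma b a * avg gamma b INR).
Proof.
move=> Ha; have W0 := Rgt_not_eq _ _ moment1_gt0.
apply: (is_derive_ext (fun z => moment a z / moment (fun _ => 1) z)) => [z|].
  by rewrite avg_moment.
have Hd := is_derive_div _ _ _ _ _ (is_derive_moment _ _ Ha) (is_derive_moment _ _ b_in) W0.
rewrite !avg_moment (moment_ext INR (fun m => INR m * 1)) => [|m _]; last by ring.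
by apply: (is_derive_eq Hd); field.
Qed.

Lemma is_derive_ln_wt_sum :
  is_derive (fun z => ln (sum1 (wt gamma z))) b (avg gamma b INR).
Proof.
apply: (is_derive_ext (fun z => ln (moment (fun _ => 1) z))) => [z|].
  by rewrite wt_sum_moment.
have Hd := is_derive_comp _ _ b _ _ (is_derive_ln _ moment1_gt0) (is_derive_moment _ _ b_in).
apply: (is_derive_eq Hd); rewrite avg_moment /scal /= /mult /=.
rewrite (moment_ext INR (fun m => INR m * 1)).
  by rewrite /Rdiv Rmult_comm.
by move=> m _; ring.
Qed.

Lemma is_derive_Mm1 : is_derive (Mm1 gamma) b (1 - Mm1 gamma b * avg gamma b INR).
Proof.
have Hr : Rbar_lt (exp b) (moment_radius (fun m => / INR m)) by rewrite moment_radius_invINR1.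
apply: (is_derive_eq (is_derive_avg _ Hr)); congr (_ - _).
rewrite avg_moment (moment_ext _ (fun _ => 1)) => [|m Hm].
  by field; apply: Rgt_not_eq moment1_gt0.
by field; apply: not_0_INR; case: m Hm.
Qed.

Lemma ex_derive_avg_INR : ex_derive (fun z => avg gamma z INR) b.
Proof. by eexists; apply: is_derive_avg; rewrite moment_radius_INR. Qed.

Lemma ex_derive_Mm2 : ex_derive (Mm2 gamma) b.
Proof. by eexists; apply: is_derive_avg; rewrite moment_radius_invINR2. Qed.

Lemma Mm1_ge0 : 0 <= Mm1 gamma b.
Proof.
rewrite /Mm1 avg_moment /Rdiv; apply: Rmult_le_pos; last exact/Rlt_le/Rinv_0_lt_compat/moment1_gt0.
apply: moment_ge0; last by rewrite moment_radius_invINR1.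
by move=> m Hm; apply/Rlt_le/Rinv_0_lt_compat/lt_0_INR; case: m Hm => // m _; lia.
Qed.

(* [Mm2 - Mm1 ^ 2] is the variance of [m^-1] under the weights [wt gamma b]. *)
Lemma Mm1_sq_le_Mm2 : Mm1 gamma b ^ 2 <= Mm2 gamma b.
Proof.
set M := Mm1 gamma b; set W := moment (fun _ => 1) b.
set A := moment (fun m => / INR m) b; set B := moment (fun m => / (INR m ^ 2)) b.
have HW : is_series _ W := Series_correct _ (ex_series_moment _ _ b_in).
have HA : is_series _ A := Series_correct _
  (ex_series_moment (fun m => / INR m) b ltac:(by rewrite moment_radius_invINR1)).
have HB : is_series _ B := Series_correct _
  (ex_series_moment (fun m => / (INR m ^ 2)) b ltac:(by rewrite moment_radius_invINR2)).
have Hvar := is_series_plus _ _ _ _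
  (is_series_minus _ _ _ _ HB (is_series_scal_l (2 * M) _ _ HA)) (is_series_scal_l (M ^ 2) _ _ HW).
rewrite /plus /opp /scal /= /mult /= in Hvar.
have Hvar0 : 0 <= B + - (2 * M * A) + M ^ 2 * W.
  rewrite -(is_series_unique _ _ Hvar); apply: Series_ge0 _ _ (ex_intro _ _ Hvar) => k.
  have -> : wt gamma b (S k) * / (INR (S k) ^ 2) + - (2 * M * (wt gamma b (S k) * / INR (S k)))
            + M ^ 2 * (wt gamma b (S k) * 1) = wt gamma b (S k) * (/ INR (S k) - M) ^ 2.
    by field; apply: not_0_INR.
  exact: Rmult_le_pos (wt_ge0 _ _) (pow2_ge_0 _).
have W0 : 0 < W := moment1_gt0.
have HM : A = M * W by rewrite /M /Mm1 avg_moment -/A -/W; field; apply: Rgt_not_eq.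
rewrite /Mm2 avg_moment -/B -/W HM in Hvar0 *.
apply: (Rmult_le_reg_r W) => //; rewrite /Rdiv Rmult_assoc Rinv_l; nra.
Qed.

End AtPoint.
End Moments.

Section FiniteSums.
Context {n : nat}.

Lemma sumI_ext (f g : 'I_n -> R) : (forall i, f i = g i) -> sumI n f = sumI n g.
Proof. by move=> E; apply: eq_bigr => i _; apply: E. Qed.

Lemma sumI_plus (f g : 'I_n -> R) : sumI n (fun i => f i + g i) = sumI n f + sumI n g.
Proof. exact: big_split. Qed.

Lemma sumI_scal c (f : 'I_n -> R) : sumI n (fun i => c * f i) = c * sumI n f.
Proof. by rewrite /sumI; elim/big_rec2: _ => [|i y1 y2 _ ->]; ring. Qed.

Lemma sumI_swap (F : 'I_n -> 'I_n -> R) :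
  sumI n (fun i => sumI n (fun j => F i j)) = sumI n (fun j => sumI n (fun i => F i j)).
Proof. exact: exchange_big. Qed.

Lemma sumI_const c : sumI n (fun _ => c) = INR n * c.
Proof.
rewrite /sumI big_const_ord; elim: n => [|k IH]; first by rewrite /=; ring.
by rewrite iterS IH S_INR; ring.
Qed.

Lemma sumI_kron (f : 'I_n -> R) i : sumI n (fun j => f j * kron i j) = f i.
Proof.
rewrite /sumI (bigD1 i) //= /kron eqxx big1 => [|j Hj]; first ring.
by rewrite eq_sym (negbTE Hj) Rmult_0_r.
Qed.

Lemma sumI_ge0 (f : 'I_n -> R) : (forall i, 0 <= f i) -> 0 <= sumI n f.
Proof.
move=> H; rewrite /sumI; elim/big_rec: _ => [|i y _ Hy]; first lra.
exact: Rplus_le_le_0_compat.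
Qed.

Definition sym_dev (V : 'I_n -> 'I_n -> R) (i j : 'I_n) : R :=
  V j i + V i j - 2 / INR n * sumI n (fun k => V k k) * kron i j.

Lemma sym_dev_sym V i j : sym_dev V i j = sym_dev V j i.
Proof. by rewrite /sym_dev /kron eq_sym; ring. Qed.

Lemma sym_dev_trace V : (0 < n)%nat -> sumI n (fun i => sym_dev V i i) = 0.
Proof.
move=> Hn; have Hn0 : INR n <> 0 by apply: not_0_INR; case: (n) Hn.
rewrite (sumI_ext _ (fun i => 2 * V i i + - (2 / INR n * sumI n (fun k => V k k)))).
  by rewrite sumI_plus sumI_scal sumI_const; field.
by move=> i; rewrite /sym_dev /kron eqxx; ring.
Qed.

Lemma sym_dev_contract V : (0 < n)%nat ->
  sumI n (fun i => sumI n (fun j => sym_dev V i j * sym_dev V i j))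
  = 2 * sumI n (fun i => sumI n (fun j => sym_dev V i j * V i j)).
Proof.
move=> Hn; set s := sym_dev V; set c := 2 / INR n * sumI n (fun k => V k k).
have Hswap : sumI n (fun i => sumI n (fun j => s i j * V j i))
           = sumI n (fun i => sumI n (fun j => s i j * V i j)).
  rewrite sumI_swap; apply: sumI_ext => i; apply: sumI_ext => j.
  by rewrite /s sym_dev_sym.
have Htr : sumI n (fun i => sumI n (fun j => s i j * kron i j)) = 0.
  by rewrite -(sym_dev_trace V Hn); apply: sumI_ext => i; rewrite sumI_kron.
rewrite (sumI_ext _ (fun i => sumI n (fun j => s i j * V j i)
                              + sumI n (fun j => s i j * V i j)
                              + - c * sumI n (fun j => s i j * kron i j))).
  by rewrite !sumI_plus !sumI_scal Hswap Htr; ring.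
move=> i; rewrite -sumI_scal -!sumI_plus; apply: sumI_ext => j.
by rewrite {1}/s /sym_dev -/c; ring.
Qed.

End FiniteSums.

Section PartialDerivatives.
Context {n : nat}.
Implicit Types (f g : field n) (x : 'I_n -> R) (t : R) (l : option 'I_n).

(* A direction [l] is either time ([None]) or the coordinate [x_i] ([Some i]). *)
Definition line l f x t : R -> R :=
  fun s => match l with None => f x s | Some i => f (upd x i s) t end.

Definition line_pt l x t : R := if l is Some i then x i else t.

Definition is_pderive l f x t (d : R) : Prop := is_derive (line l f x t) (line_pt l x t) d.

Definition pderive l f x t : R := Derive (line l f x t) (line_pt l x t).

Lemma upd_id x i : upd x i (x i) = x.
Proof. by apply: functional_extensionality => j; rewrite /upd; case: eqP => [->|]. Qed.

Lemma line_at_pt l f x t : line l f x t (line_pt l x t) = f x t.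
Proof. by case: l => [i|] //=; rewrite upd_id. Qed.

Lemma line_map (phi : R -> R) l f x t :
  line l (fun y s => phi (f y s)) x t = fun s => phi (line l f x t s).
Proof. by case: l. Qed.

Lemma line_map2 (op : R -> R -> R) l f g x t :
  line l (fun y s => op (f y s) (g y s)) x t = fun s => op (line l f x t s) (line l g x t s).
Proof. by case: l. Qed.

Lemma is_pderive_unique {l f x t d} : is_pderive l f x t d -> pderive l f x t = d.
Proof. exact: is_derive_unique. Qed.

Lemma is_pderive_pderive {l f x t d} : is_pderive l f x t d -> is_pderive l f x t (pderive l f x t).
Proof. by move=> H; rewrite (is_pderive_unique H). Qed.

Lemma is_pderive_eq {l f x t d d'} : is_pderive l f x t d -> d = d' -> is_pderive l f x t d'.
Proof. by move=> H <-. Qed.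

Lemma is_pderive_ext {l} f {g x t d} :
  (forall y s, f y s = g y s) -> is_pderive l f x t d -> is_pderive l g x t d.
Proof. by move=> E; apply: is_derive_ext => s; case: l => [i|] /=; rewrite E. Qed.

Lemma is_pderive_C1 l f x t : Ck 1 f -> is_pderive l f x t (pderive l f x t).
Proof.
move=> [_ [Hx [Ht _]]]; apply: Derive_correct.
by case: l => [i|] /=; [apply: Hx | apply: Ht].
Qed.

Lemma Ck1_dx i f : smooth f -> Ck 1 (dx i f).
Proof. by move=> Hf; case: (Hf 2%nat) => _ [_ [_ [Hdx _]]]; apply: Hdx. Qed.

Lemma is_pderive_const l c x t : is_pderive l (fun _ _ => c) x t 0.
Proof. by case: l => [i|]; apply: is_derive_const. Qed.

Lemma is_pderive_comp {phi : R -> R} {l f x t dphi df} :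
  is_derive phi (f x t) dphi -> is_pderive l f x t df ->
  is_pderive l (fun y s => phi (f y s)) x t (df * dphi).
Proof.
rewrite -(line_at_pt l f) => Hphi Hf.
by rewrite /is_pderive line_map; apply: is_derive_comp.
Qed.

Lemma is_pderive_plus {l f g x t df dg} : is_pderive l f x t df -> is_pderive l g x t dg ->
  is_pderive l (fun y s => f y s + g y s) x t (df + dg).
Proof.
by move=> Hf Hg; rewrite /is_pderive (line_map2 Rplus); apply: (is_derive_plus _ _ _ _ _ Hf Hg).
Qed.

Lemma is_pderive_mult {l f g x t df dg} : is_pderive l f x t df -> is_pderive l g x t dg ->
  is_pderive l (fun y s => f y s * g y s) x t (df * g x t + f x t * dg).
Proof.
move=> Hf Hg; rewrite /is_pderive (line_map2 Rmult) -(line_at_pt l f x t) -(line_at_pt l g x t).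
exact: (is_derive_mult _ _ _ _ _ Hf Hg Rmult_comm).
Qed.

Lemma is_pderive_scal c {l f x t df} : is_pderive l f x t df ->
  is_pderive l (fun y s => c * f y s) x t (c * df).
Proof.
move=> Hf; apply: is_pderive_eq (is_pderive_mult (is_pderive_const l c x t) Hf) _; ring.
Qed.

Lemma is_pderive_opp {l f x t df} : is_pderive l f x t df ->
  is_pderive l (fun y s => - f y s) x t (- df).
Proof.
move=> /(is_pderive_scal (-1)) Hf.
apply: (is_pderive_ext (fun y s => -1 * f y s)) => [y s|]; first ring.
by apply: is_pderive_eq Hf _; ring.
Qed.

Lemma is_pderive_minus {l f g x t df dg} : is_pderive l f x t df -> is_pderive l g x t dg ->
  is_pderive l (fun y s => f y s - g y s) x t (df - dg).
Proof. by move=> Hf /is_pderive_opp Hg; apply: is_pderive_plus Hf Hg. Qed.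

Lemma is_pderive_inv {l f x t df} : f x t <> 0 -> is_pderive l f x t df ->
  is_pderive l (fun y s => / f y s) x t (- df / f x t ^ 2).
Proof.
move=> Hf0 Hf; apply: is_pderive_eq (is_pderive_comp (phi := Rinv) _ Hf) _.
  exact: is_derive_inv (is_derive_id _) Hf0.
by rewrite /Rdiv /one /=; ring.
Qed.

Lemma is_pderive_div {l f g x t df dg} : g x t <> 0 ->
  is_pderive l f x t df -> is_pderive l g x t dg ->
  is_pderive l (fun y s => f y s / g y s) x t (df / g x t - f x t * dg / g x t ^ 2).
Proof.
move=> Hg0 Hf Hg; apply: is_pderive_eq (is_pderive_mult Hf (is_pderive_inv Hg0 Hg)) _.
by rewrite /Rdiv; ring.
Qed.

Lemma is_pderive_ln {l f x t df} : 0 < f x t -> is_pderive l f x t df ->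
  is_pderive l (fun y s => ln (f y s)) x t (df / f x t).
Proof. by move=> Hf0 Hf; apply: is_pderive_comp (is_derive_ln _ Hf0) Hf. Qed.

Lemma is_pderive_pow2 {l f x t df} : is_pderive l f x t df ->
  is_pderive l (fun y s => f y s ^ 2) x t (2 * f x t * df).
Proof.
move=> Hf; apply: (is_pderive_ext (fun y s => f y s * f y s)) => [y s|]; first ring.
by apply: is_pderive_eq (is_pderive_mult Hf Hf) _; ring.
Qed.

Lemma is_pderive_sumI {m l} {F : 'I_m -> field n} {x t dF} :
  (forall j, is_pderive l (F j) x t (dF j)) ->
  is_pderive l (fun y s => sumI m (fun j => F j y s)) x t (sumI m dF).
Proof.
move=> HF; rewrite /sumI; elim: (index_enum _) => [|j r IH].
  apply: (is_pderive_ext (fun _ _ => 0)) => [y s|]; first by rewrite big_nil.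
  by rewrite big_nil; apply: is_pderive_const.
apply: (is_pderive_ext (fun y s => F j y s + \big[Rplus/0]_(k <- r) F k y s)).
  by move=> y s; rewrite big_cons.
by rewrite big_cons; apply: is_pderive_plus.
Qed.

Lemma pderive_mult {l f g x t df dg} : is_pderive l f x t df -> is_pderive l g x t dg ->
  pderive l (fun y s => f y s * g y s) x t = df * g x t + f x t * dg.
Proof. by move=> Hf Hg; apply/is_pderive_unique/is_pderive_mult. Qed.

Lemma dt_pderive f x t : dt f x t = pderive None f x t.
Proof. by []. Qed.

Lemma dx_pderive i f x t : dx i f x t = pderive (Some i) f x t.
Proof. by []. Qed.

End PartialDerivatives.

Section EntropyBalance.
Variables (n : nat) (gamma : nat -> R).
Variables (rho : field n) (u : 'I_n -> field n) (Th beta : field n).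
Hypothesis gamma_pos : forall m, (1 <= m)%nat -> 0 < gamma m.
Hypotheses (rho_smooth : smooth rho) (u_smooth : forall i, smooth (u i)).
Hypotheses (Th_smooth : smooth Th) (beta_smooth : smooth beta).
Hypotheses (rho_pos : forall x t, 0 < rho x t) (Th_pos : forall x t, 0 < Th x t).
Hypothesis beta_in : forall x t, Rbar_lt (exp (beta x t)) (moment_radius gamma (fun _ => 1)).

Lemma wt_sum_beta_gt0 x t : 0 < sum1 (wt gamma (beta x t)).
Proof. exact: wt_sum_gt0. Qed.

Section Direction.
Variables (l : option 'I_n) (x : 'I_n -> R) (t : R).

Lemma is_pderive_beta_comp (phi : R -> R) dphi :
  is_derive phi (beta x t) dphi ->
  is_pderive l (fun y s => phi (beta y s)) x t (pderive l beta x t * dphi).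
Proof. by move=> Hphi; apply: is_pderive_comp Hphi (is_pderive_C1 _ _ _ _ (beta_smooth 1%nat)). Qed.

Lemma is_pderive_Mm1 : is_pderive l (fun y s => Mm1 gamma (beta y s)) x t
  (pderive l beta x t * (1 - Mm1 gamma (beta x t) * avg gamma (beta x t) INR)).
Proof. exact/is_pderive_beta_comp/(is_derive_Mm1 _ gamma_pos _ (beta_in x t)). Qed.

Lemma is_pderive_ln_wt_sum : is_pderive l (fun y s => ln (sum1 (wt gamma (beta y s)))) x t
  (pderive l beta x t * avg gamma (beta x t) INR).
Proof.
apply: (is_pderive_beta_comp (fun z => ln (sum1 (wt gamma z)))).
exact: is_derive_ln_wt_sum _ gamma_pos _ (beta_in x t).
Qed.

Lemma is_pderive_avg_INR : is_pderive l (fun y s => avg gamma (beta y s) INR) x t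
  (pderive l beta x t * Derive (fun z => avg gamma z INR) (beta x t)).
Proof.
apply: (is_pderive_beta_comp (fun z => avg gamma z INR)).
exact/Derive_correct/(ex_derive_avg_INR _ gamma_pos _ (beta_in x t)).
Qed.

Lemma is_pderive_Mm2 : is_pderive l (fun y s => Mm2 gamma (beta y s)) x t
  (pderive l beta x t * Derive (Mm2 gamma) (beta x t)).
Proof. exact/is_pderive_beta_comp/Derive_correct/(ex_derive_Mm2 _ gamma_pos _ (beta_in x t)). Qed.

End Direction.

Ltac pos_tac := cbv beta; first
  [ apply: rho_pos | apply: Th_pos | apply: wt_sum_beta_gt0 | apply: PI_RGT_0
  | split; pos_tac | apply: Rgt_not_eq; pos_tac | apply: Rmult_lt_0_compat; pos_tac | lra ].

Ltac C1_tac := first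
  [ apply: rho_smooth | apply: u_smooth | apply: Th_smooth | apply: beta_smooth
  | apply: Ck1_dx; C1_tac ].

(* Hook for fields with a known derivative, extended with [::=] further down. *)
Ltac pderive_atom_tac := fail.

Ltac pderive_tac :=
  cbv beta;
  lazymatch goal with
  | |- is_pderive _ (fun _ _ => ?c) _ _ _ => apply: is_pderive_const
  | |- is_pderive _ (fun y s => Mm1 _ (beta y s)) _ _ _ => apply: is_pderive_Mm1
  | |- is_pderive _ (fun y s => Mm2 _ (beta y s)) _ _ _ => apply: is_pderive_Mm2
  | |- is_pderive _ (fun y s => avg _ (beta y s) INR) _ _ _ => apply: is_pderive_avg_INR
  | |- is_pderive _ (fun y s => ln (sum1 (wt _ (beta y s)))) _ _ _ =>
      apply: is_pderive_ln_wt_sum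
  | |- is_pderive _ (fun y s => @?a y s + @?b y s) _ _ _ =>
      apply: (is_pderive_plus (f := a) (g := b)); pderive_tac
  | |- is_pderive _ (fun y s => @?a y s - @?b y s) _ _ _ =>
      apply: (is_pderive_minus (f := a) (g := b)); pderive_tac
  | |- is_pderive _ (fun y s => - @?a y s) _ _ _ =>
      apply: (is_pderive_opp (f := a)); pderive_tac
  | |- is_pderive _ (fun y s => @?a y s * @?b y s) _ _ _ =>
      apply: (is_pderive_mult (f := a) (g := b)); pderive_tac
  | |- is_pderive _ (fun y s => @?a y s / @?b y s) _ _ _ =>
      apply: (is_pderive_div (f := a) (g := b)); [pos_tac | pderive_tac | pderive_tac]
  | |- is_pderive _ (fun y s => / @?a y s) _ _ _ =>
      apply: (is_pderive_inv (f := a)); [pos_tac | pderive_tac]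
  | |- is_pderive _ (fun y s => @?a y s ^ 2) _ _ _ =>
      apply: (is_pderive_pow2 (f := a)); pderive_tac
  | |- is_pderive _ (fun y s => ln (@?a y s)) _ _ _ =>
      apply: (is_pderive_ln (f := a)); [pos_tac | pderive_tac]
  | |- is_pderive _ (fun y s => sumI _ (fun j => @?F j y s)) _ _ _ =>
      apply: (is_pderive_sumI (F := F)) => ?; pderive_tac
  | |- is_pderive ?l (fun y s => ?f y s) ?x ?t _ =>
      first [apply: (is_pderive_C1 l f x t); C1_tac | pderive_atom_tac]
  | |- is_pderive ?l ?f ?x ?t _ =>
      first [apply: (is_pderive_C1 l f x t); C1_tac | pderive_atom_tac]
  end.

Ltac diff_tac := apply: is_pderive_pderive; pderive_tac.

Definition usq : field n := fun y s => sumI n (fun j => u j y s ^ 2).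
Definition number : field n := fun y s => rho y s * Mm1 gamma (beta y s).
Definition energy : field n :=
  fun y s => rho y s * usq y s + INR n * rho y s * Th y s * Mm1 gamma (beta y s).
Definition ent_log : field n :=
  fun y s => ln (rho y s) - ln (Zpart n gamma (beta y s) (Th y s)) - 1 - INR n / 2.

Lemma ln_Zpart y s : ln (Zpart n gamma (beta y s) (Th y s))
  = INR n / 2 * ln (2 * PI * Th y s) + ln (sum1 (wt gamma (beta y s))).
Proof. by rewrite /Zpart /Rpower ln_mult ?ln_exp //; [apply: exp_pos | pos_tac]. Qed.

Section Formulas.
Variables (l : option 'I_n) (x : 'I_n -> R) (t : R).
Local Notation D f := (pderive l f x t).
Local Notation M1 := (Mm1 gamma (beta x t)).
Local Notation mbar := (avg gamma (beta x t) INR).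

Ltac formula_tac := apply: is_pderive_unique; apply: is_pderive_eq; [pderive_tac | cbv beta].

Lemma pderive_number : D number = D rho * M1 + rho x t * (D beta * (1 - M1 * mbar)).
Proof. by rewrite /number; formula_tac; ring. Qed.

Lemma pderive_momentum j :
  D (fun y s => rho y s * u j y s) = D rho * u j x t + rho x t * D (u j).
Proof. by formula_tac; ring. Qed.

Lemma pderive_energy : D energy = D rho * usq x t
  + rho x t * sumI n (fun j => 2 * u j x t * D (u j))
  + INR n * (D rho * Th x t * M1 + rho x t * D Th * M1
             + rho x t * Th x t * (D beta * (1 - M1 * mbar))).
Proof. by rewrite /energy /usq; formula_tac; ring. Qed.

Lemma is_pderive_ent_log :
  is_pderive l ent_log x t (D rho / rho x t - INR n / 2 * (D Th / Th x t) - mbar * D beta).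
Proof.
apply: (is_pderive_ext (fun y s => ln (rho y s)
  - (INR n / 2 * ln (2 * PI * Th y s) + ln (sum1 (wt gamma (beta y s)))) - 1 - INR n / 2)).
  by move=> y s; rewrite /ent_log ln_Zpart.
by apply: is_pderive_eq; [pderive_tac | cbv beta; field; pos_tac].
Qed.

Lemma is_pderive_entropy : is_pderive l (entropy n gamma rho Th beta) x t
  (D rho * (M1 * ent_log x t + beta x t) + rho x t * (D beta * (1 - M1 * mbar) * ent_log x t
    + M1 * (D rho / rho x t - INR n / 2 * (D Th / Th x t) - mbar * D beta) + D beta)).
Proof.
apply: (is_pderive_ext (fun y s => rho y s * (Mm1 gamma (beta y s) * ent_log y s + beta y s))).
  by [].
apply: is_pderive_eq.
  apply: (is_pderive_mult (f := rho)); first pderive_tac.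
  apply: (is_pderive_plus (g := beta)); last pderive_tac.
  apply: (is_pderive_mult (f := fun y s => Mm1 gamma (beta y s)) (g := ent_log)).
    pderive_tac.
  exact: is_pderive_ent_log.
by cbv beta; ring.
Qed.

Definition lam_number : field n := fun y s => ent_log y s + 1 + INR n / 2.
Definition lam_mass : field n := fun y s => beta y s - usq y s / (2 * Th y s).
Definition lam_mom (j : 'I_n) : field n := fun y s => u j y s / Th y s.
Definition lam_energy : field n := fun y s => - / (2 * Th y s).

Lemma entropy_Gibbs : D (entropy n gamma rho Th beta) =
  lam_number x t * D number + lam_mass x t * D rho
  + sumI n (fun j => lam_mom j x t * D (fun y s => rho y s * u j y s))
  + lam_energy x t * D energy.
Proof.
have Hmom : sumI n (fun j => lam_mom j x t * D (fun y s => rho y s * u j y s))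
  = (D rho * usq x t + rho x t * sumI n (fun j => u j x t * D (u j))) / Th x t.
  rewrite (sumI_ext _ (fun j => D rho / Th x t * u j x t ^ 2
                                + rho x t / Th x t * (u j x t * D (u j)))).
    by rewrite sumI_plus !sumI_scal /usq; field; pos_tac.
  by move=> j; rewrite pderive_momentum /lam_mom; field; pos_tac.
have Hkin : sumI n (fun j => 2 * u j x t * D (u j)) = 2 * sumI n (fun j => u j x t * D (u j)).
  by rewrite -sumI_scal; apply: sumI_ext => j; ring.
rewrite (is_pderive_unique is_pderive_entropy) pderive_number pderive_energy Hmom Hkin.
rewrite /lam_number /lam_mass /lam_energy.
by field; split; pos_tac.
Qed.

End Formulas.

Definition pressure : field n := fun y s => rho y s * Th y s * Mm1 gamma (beta y s).

Lemma entropy_Euler_relation x t : entropy n gamma rho Th beta x t =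
  lam_number x t * number x t + lam_mass x t * rho x t
  + sumI n (fun j => lam_mom j x t * (rho x t * u j x t))
  + lam_energy x t * (energy x t + 2 * pressure x t).
Proof.
have Hmom : sumI n (fun j => lam_mom j x t * (rho x t * u j x t)) = rho x t / Th x t * usq x t.
  by rewrite /usq -sumI_scal; apply: sumI_ext => j; rewrite /lam_mom; field; pos_tac.
rewrite Hmom /entropy /lam_number /lam_mass /lam_energy /number /energy /pressure -/(ent_log x t).
by field; pos_tac.
Qed.

Section Convective.
Variables (x : 'I_n -> R) (t : R).

Lemma convective_flux_identity i :
  dx i (fun y s => entropy n gamma rho Th beta y s * u i y s) x t =
  lam_number x t * dx i (fun y s => number y s * u i y s) x t
  + lam_mass x t * dx i (fun y s => rho y s * u i y s) x t
  + sumI n (fun j => lam_mom j x t * dx i (fun y s => rho y s * u j y s * u i y s) x t)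
  + lam_mom i x t * dx i pressure x t
  + lam_energy x t * dx i (fun y s => rho y s * usq y s * u i y s
      + (INR n + 2) * rho y s * Th y s * Mm1 gamma (beta y s) * u i y s) x t.
Proof.
pose D f := pderive (Some i) f x t.
have dS := is_pderive_pderive (is_pderive_entropy (Some i) x t).
have du j : is_pderive (Some i) (u j) x t (D (u j)) by diff_tac.
have drho : is_pderive (Some i) rho x t (D rho) by diff_tac.
have dnum : is_pderive (Some i) number x t (D number) by rewrite /D /number; diff_tac.
have dQ j : is_pderive (Some i) (fun y s => rho y s * u j y s) x t
                       (D (fun y s => rho y s * u j y s)) by diff_tac.
have dE : is_pderive (Some i) energy x t (D energy) by rewrite /D /energy /usq; diff_tac.
have dP : is_pderive (Some i) pressure x t (D pressure) by rewrite /D /pressure; diff_tac.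
have -> : (fun y s => rho y s * usq y s * u i y s
             + (INR n + 2) * rho y s * Th y s * Mm1 gamma (beta y s) * u i y s)
        = (fun y s => (energy y s + 2 * pressure y s) * u i y s).
  by do 2 apply: functional_extensionality => ?; rewrite /energy /pressure; ring.
rewrite !dx_pderive.
rewrite (pderive_mult dS (du i)) (pderive_mult dnum (du i)) (pderive_mult drho (du i)).
rewrite (pderive_mult (is_pderive_plus dE (is_pderive_scal 2 dP)) (du i)).
rewrite (sumI_ext _ (fun j => u i x t * (lam_mom j x t * D (fun y s => rho y s * u j y s))
                            + D (u i) * (lam_mom j x t * (rho x t * u j x t)))); last first.
  by move=> j; have := pderive_mult (dQ j) (du i); cbv beta; rewrite dx_pderive => ->; ring.
rewrite sumI_plus !sumI_scal /D (entropy_Gibbs (Some i) x t) entropy_Euler_relation.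
by rewrite /lam_mom /lam_energy; field; pos_tac.
Qed.

Lemma entropy_convective_balance R1 (R3 : 'I_n -> R) R4 :
  dt number x t + sumI n (fun i => dx i (fun y s => number y s * u i y s) x t) = R1 ->
  dt rho x t + sumI n (fun i => dx i (fun y s => rho y s * u i y s) x t) = 0 ->
  (forall j, dt (fun y s => rho y s * u j y s) x t
     + sumI n (fun i => dx i (fun y s => rho y s * u j y s * u i y s) x t)
     + dx j pressure x t = R3 j) ->
  dt energy x t + sumI n (fun i => dx i (fun y s => rho y s * usq y s * u i y s
     + (INR n + 2) * rho y s * Th y s * Mm1 gamma (beta y s) * u i y s) x t) = R4 ->
  dt (entropy n gamma rho Th beta) x t
    + sumI n (fun i => dx i (fun y s => entropy n gamma rho Th beta y s * u i y s) x t)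
  = lam_number x t * R1 + sumI n (fun j => lam_mom j x t * R3 j) + lam_energy x t * R4.
Proof.
move=> <- Hmass Hmom <-.
have -> : sumI n (fun j => lam_mom j x t * R3 j) =
    sumI n (fun j => lam_mom j x t * dt (fun y s => rho y s * u j y s) x t)
  + sumI n (fun i => sumI n (fun j =>
      lam_mom j x t * dx i (fun y s => rho y s * u j y s * u i y s) x t))
  + sumI n (fun i => lam_mom i x t * dx i pressure x t).
  rewrite (sumI_swap (fun i j => _)) -!sumI_plus; apply: sumI_ext => j.
  by rewrite -Hmom sumI_scal; ring.
rewrite (sumI_ext _ _ convective_flux_identity) !sumI_plus !sumI_scal.
rewrite dt_pderive (entropy_Gibbs None x t) -!dt_pderive.
rewrite (sumI_ext _ (fun j => lam_mom j x t * dt (fun y s => rho y s * u j y s) x t)) //.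
have -> : dt rho x t = - sumI n (fun i => dx i (fun y s => rho y s * u i y s) x t) by lra.
ring.
Qed.

End Convective.

Definition chi : field n := fun y s => chi_c gamma (rho y s) (Th y s) (beta y s).
Definition nu : field n := fun y s => nu_c gamma (rho y s) (Th y s) (beta y s).
Definition kappa : field n := fun y s => kappa_c n gamma (rho y s) (Th y s) (beta y s).
Definition mu : field n := fun y s => mu_c gamma (rho y s) (Th y s) (beta y s).

Definition diff_flux (i : 'I_n) : field n := fun y s => nu y s * dx i chi y s.
Definition heat_flux (i : 'I_n) : field n := fun y s => kappa y s * dx i Th y s.
Definition stress (j i : 'I_n) : field n := fun y s => mu y s * Defs.sigma u j i y s.
Definition visc_energy_flux (i : 'I_n) : field n := fun y s =>
  (INR n + 2) * nu y s * Th y s * dx i chi y s + 2 * kappa y s * dx i Th y s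
  + 2 * mu y s * sumI n (fun j => Defs.sigma u i j y s * u j y s).
Definition visc_entropy_flux (i : 'I_n) : field n := fun y s =>
  - nu y s * ent_log y s * dx i chi y s + kappa y s * (dx i Th y s / Th y s).

Lemma sigma_sym i j y s : Defs.sigma u i j y s = Defs.sigma u j i y s.
Proof. exact: (sym_dev_sym (fun a b => dx a (u b) y s)). Qed.

Lemma is_pderive_chi l x t : is_pderive l chi x t (pderive l rho x t / rho x t
  + pderive l Th x t / Th x t - avg gamma (beta x t) INR * pderive l beta x t).
Proof.
apply: (is_pderive_ext (fun y s => ln (rho y s) + ln (Th y s) - ln (sum1 (wt gamma (beta y s))))).
  move=> y s; rewrite /chi /chi_c /Rdiv ln_mult; try pos_tac.
    by rewrite ln_mult ?ln_Rinv //; pos_tac.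
  by apply: Rinv_0_lt_compat; pos_tac.
by apply: is_pderive_eq; [pderive_tac | cbv beta; ring].
Qed.

Lemma dx_chi i y s : dx i chi y s =
  dx i rho y s / rho y s + dx i Th y s / Th y s - avg gamma (beta y s) INR * dx i beta y s.
Proof. exact: is_pderive_unique (is_pderive_chi (Some i) y s). Qed.

Section ViscousFluxes.
Variables (l : option 'I_n) (x : 'I_n -> R) (t : R).
Local Notation D f := (pderive l f x t).

Lemma is_pderive_diff_flux i : is_pderive l (diff_flux i) x t (D (diff_flux i)).
Proof.
apply: is_pderive_pderive; apply: (is_pderive_ext (fun y s => nu y s * (dx i rho y s / rho y s
  + dx i Th y s / Th y s - avg gamma (beta y s) INR * dx i beta y s))).
  by move=> y s; rewrite /diff_flux dx_chi.
by rewrite /nu /nu_c; pderive_tac.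
Qed.

Lemma is_pderive_heat_flux i : is_pderive l (heat_flux i) x t (D (heat_flux i)).
Proof. by rewrite /heat_flux /kappa /kappa_c; diff_tac. Qed.

Lemma is_pderive_stress j i : is_pderive l (stress j i) x t (D (stress j i)).
Proof. by rewrite /stress /mu /mu_c /Defs.sigma /divx; diff_tac. Qed.

End ViscousFluxes.

Ltac pderive_atom_tac ::= first
  [ apply: is_pderive_diff_flux | apply: is_pderive_heat_flux | apply: is_pderive_stress
  | apply: (is_pderive_pderive (is_pderive_ent_log _ _ _))
  | apply: (is_pderive_pderive (is_pderive_entropy _ _ _)) ].

Section ViscousFormulas.
Variables (l : option 'I_n) (x : 'I_n -> R) (t : R).
Local Notation D f := (pderive l f x t).

Lemma pderive_visc_energy_flux i : D (visc_energy_flux i) =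
  (INR n + 2) * (D Th * diff_flux i x t + Th x t * D (diff_flux i)) + 2 * D (heat_flux i)
  + 2 * sumI n (fun j => D (stress j i) * u j x t + stress j i x t * D (u j)).
Proof.
apply: is_pderive_unique.
apply: (is_pderive_ext (fun y s => (INR n + 2) * (Th y s * diff_flux i y s) + 2 * heat_flux i y s
                                   + 2 * sumI n (fun j => stress j i y s * u j y s))).
  move=> y s; rewrite /visc_energy_flux /diff_flux /heat_flux /stress.
  rewrite (sumI_ext _ (fun j => mu y s * (Defs.sigma u i j y s * u j y s))) ?sumI_scal.
    by ring.
  by move=> j; rewrite sigma_sym; ring.
by apply: is_pderive_eq; [pderive_tac | cbv beta; ring].
Qed.

Lemma is_pderive_visc_entropy_flux i : is_pderive l (visc_entropy_flux i) x t
  (- (D ent_log * diff_flux i x t + ent_log x t * D (diff_flux i))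
   + D (heat_flux i) / Th x t - heat_flux i x t * D Th / Th x t ^ 2).
Proof.
apply: (is_pderive_ext (fun y s => - (ent_log y s * diff_flux i y s) + heat_flux i y s / Th y s)).
  by move=> y s; rewrite /visc_entropy_flux /diff_flux /heat_flux /Rdiv; ring.
by apply: is_pderive_eq; [pderive_tac | cbv beta; ring].
Qed.

Lemma pderive_ent_log_chi : D ent_log = D chi - (1 + INR n / 2) * (D Th / Th x t).
Proof.
rewrite (is_pderive_unique (is_pderive_ent_log _ _ _)) (is_pderive_unique (is_pderive_chi _ _ _)).
by field; pos_tac.
Qed.

End ViscousFormulas.

Lemma viscous_flux_identity x t i :
  lam_number x t * dx i (diff_flux i) x t + sumI n (fun j => lam_mom j x t * dx i (stress j i) x t)
  + lam_energy x t * dx i (visc_energy_flux i) x t + dx i (visc_entropy_flux i) x t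
  = - (diff_flux i x t * dx i chi x t + heat_flux i x t * dx i Th x t / Th x t ^ 2
       + / Th x t * sumI n (fun j => stress j i x t * dx i (u j) x t)).
Proof.
rewrite !dx_pderive pderive_visc_energy_flux.
rewrite (is_pderive_unique (is_pderive_visc_entropy_flux _ _ _ _)) pderive_ent_log_chi.
rewrite sumI_plus (sumI_ext _ (fun j => / Th x t * (dx i (stress j i) x t * u j x t))); last first.
  by move=> j; rewrite /lam_mom; field; pos_tac.
rewrite !sumI_scal /lam_number /lam_energy.
(* identify [dx i] with [pderive (Some i)] also under the sums over [j] *)
rewrite /dx /pderive /line /=; field; pos_tac.
Qed.

Lemma sigma_contract x t : (0 < n)%nat ->
  sumI n (fun i => sumI n (fun j => Defs.sigma u j i x t * dx i (u j) x t))
  = / 2 * sumI n (fun i => sumI n (fun j => Defs.sigma u i j x t * Defs.sigma u i j x t)).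
Proof.
move=> Hn; pose V a b := dx a (u b) x t.
rewrite (sumI_ext _ (fun i => sumI n (fun j => sym_dev V i j * V i j))); last first.
  by move=> i; apply: sumI_ext => j; rewrite (sym_dev_sym V i j).
rewrite [X in _ = / 2 * X]
  (_ : _ = sumI n (fun i => sumI n (fun j => sym_dev V i j * sym_dev V i j))) //.
by rewrite (sym_dev_contract V Hn); field.
Qed.

Lemma entropy_viscous_balance eps x t : (0 < n)%nat ->
  lam_number x t * (eps * sumI n (fun i => dx i (diff_flux i) x t))
  + sumI n (fun j => lam_mom j x t * (eps * sumI n (fun i => dx i (stress j i) x t)))
  + lam_energy x t * (eps * sumI n (fun i => dx i (visc_energy_flux i) x t))
  + eps * sumI n (fun i => dx i (visc_entropy_flux i) x t)
  = - eps * dissip n gamma rho u Th beta x t.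
Proof.
move=> Hn.
have -> : sumI n (fun j => lam_mom j x t * (eps * sumI n (fun i => dx i (stress j i) x t)))
  = eps * sumI n (fun i => sumI n (fun j => lam_mom j x t * dx i (stress j i) x t)).
  rewrite sumI_swap -sumI_scal; apply: sumI_ext => j.
  by rewrite -!sumI_scal; apply: sumI_ext => i; ring.
rewrite -!sumI_scal -!sumI_plus.
rewrite (sumI_ext _ (fun i => eps * (lam_number x t * dx i (diff_flux i) x t
    + sumI n (fun j => lam_mom j x t * dx i (stress j i) x t)
    + lam_energy x t * dx i (visc_energy_flux i) x t + dx i (visc_entropy_flux i) x t)));
  last by move=> i; ring.
rewrite sumI_scal (sumI_ext _ _ (viscous_flux_identity x t)).
rewrite (sumI_ext _ (fun i => - nu x t * dx i chi x t ^ 2 + - kappa x t * (dx i Th x t / Th x t) ^ 2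
    + - (mu x t / Th x t) * sumI n (fun j => Defs.sigma u j i x t * dx i (u j) x t))); last first.
  move=> i; have -> : sumI n (fun j => stress j i x t * dx i (u j) x t)
      = mu x t * sumI n (fun j => Defs.sigma u j i x t * dx i (u j) x t).
    by rewrite -sumI_scal; apply: sumI_ext => j; rewrite /stress; ring.
  by rewrite /diff_flux /heat_flux; field; pos_tac.
rewrite !sumI_plus !sumI_scal sigma_contract // /dissip -/chi -/(nu x t) -/(kappa x t) -/(mu x t).
by field; pos_tac.
Qed.

Lemma pderive_eflux eps x t i : dx i (eflux n eps gamma rho u Th beta i) x t =
  dx i (fun y s => entropy n gamma rho Th beta y s * u i y s) x t
  + eps * dx i (visc_entropy_flux i) x t.
Proof.
rewrite dx_pderive; apply: is_pderive_unique.
apply: (is_pderive_plus (f := fun y s => _ * u i y s)).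
  by apply: is_pderive_pderive; pderive_tac.
exact/is_pderive_scal/is_pderive_pderive/is_pderive_visc_entropy_flux.
Qed.

Lemma dissip_ge0 x t : 0 <= dissip n gamma rho u Th beta x t.
Proof.
have Hrho := rho_pos x t; have HTh := Th_pos x t.
have HM1 := Mm1_ge0 _ gamma_pos _ (beta_in x t).
have Hvar := Mm1_sq_le_Mm2 _ gamma_pos _ (beta_in x t).
have HM2 : 0 <= Mm2 gamma (beta x t) by have := pow2_ge_0 (Mm1 gamma (beta x t)); lra.
have Hn := pos_INR n.
have Hhalf : 0 <= / 2 by apply/Rlt_le/Rinv_0_lt_compat; lra.
have Hsq (f : 'I_n -> R) : 0 <= sumI n (fun i => f i ^ 2).
  by apply: sumI_ge0 => i; apply: pow2_ge_0.
rewrite /dissip /nu_c /kappa_c /mu_c.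
move: (Mm1 gamma (beta x t)) (Mm2 gamma (beta x t)) HM1 HM2 Hvar => M1 M2 HM1 HM2 Hvar.
apply: Rplus_le_le_0_compat; first apply: Rplus_le_le_0_compat.
- by apply: Rmult_le_pos (Hsq _); repeat apply: Rmult_le_pos; lra.
- by apply: Rmult_le_pos (Hsq _); repeat apply: Rmult_le_pos; lra.
- apply: Rmult_le_pos; last by apply: sumI_ge0 => i; apply: sumI_ge0 => j; apply: Rle_0_sqr.
  by apply: Rdiv_le_0_compat; [repeat apply: Rmult_le_pos | ]; lra.
Qed.

Lemma entropy_balance eps x t : (0 < n)%nat -> NSME n eps gamma rho u Th beta ->
  dt (entropy n gamma rho Th beta) x t
    + sumI n (fun i => dx i (eflux n eps gamma rho u Th beta i) x t)
  = - eps * dissip n gamma rho u Th beta x t.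
Proof.
move=> Hn /(_ x t) [Hnum [Hmass [Hmom Henergy]]].
rewrite (sumI_ext _ _ (pderive_eflux eps x t)) sumI_plus sumI_scal -Rplus_assoc.
rewrite (entropy_convective_balance _ _ _ _ _ Hnum Hmass Hmom Henergy).
exact: entropy_viscous_balance.
Qed.

End EntropyBalance.

Theorem proposition4p9 (n : nat) (eps : R) (gamma : nat -> R)
  (rho : field n) (u : 'I_n -> field n) (Th beta : field n) :
  (1 <= n)%nat ->
  0 < eps ->
  (forall m, (1 <= m)%nat -> 0 <= gamma m) ->
  (exists b, inS gamma b) ->
  smooth rho -> (forall i, smooth (u i)) -> smooth Th -> smooth beta ->
  (forall x t, 0 < rho x t) ->
  (forall x t, 0 < Th x t) ->
  (forall x t, exists delta, 0 < delta /\ inS gamma (beta x t + delta)) ->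
  NSME n eps gamma rho u Th beta ->
  forall x t,
    dt (entropy n gamma rho Th beta) x t
      + sumI n (fun i => dx i (eflux n eps gamma rho u Th beta i) x t)
    = - eps * dissip n gamma rho u Th beta x t
  /\ - eps * dissip n gamma rho u Th beta x t <= 0.
Proof.
move=> Hn Heps _ [b [gamma_pos _]] Srho Su STh Sbeta Hrho HTh Hbeta HN x t.
have beta_in y s : Rbar_lt (exp (beta y s)) (moment_radius gamma (fun _ => 1)).
  have [d [Hd /inS_moment_radius]] := Hbeta y s.
  by apply: Rbar_lt_le_trans; apply: exp_increasing; lra.
split; first exact: entropy_balance.
have := dissip_ge0 _ _ _ u _ _ gamma_pos Hrho HTh beta_in x t; nra.
Qed.
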